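(* Let $i\ge 3$ and $k\ge 3$ be integers. Then: (a) $g_2(L_i,L_{i+2},L_{i+k})=(3L_i-1)L_{i+2}-L_i$ whenever $k\ge i+4$; (b) $g_2(L_i,L_{i+2},L_{2i+3})=(L_i-1)L_{i+2}+L_{2i+3}-L_i$; (c) $g_2(L_i,L_{i+2},L_{2i+2})=(L_i-1)L_{i+2}+L_{2i+2}-L_i$ if $i$ is odd, and $g_2(L_i,L_{i+2},L_{2i+2})=(2L_i-1)L_{i+2}-L_i$ if $i$ is even; (d) $g_2(L_i,L_{i+2},L_{2i+1})=(2F_{i-1}-1)L_{i+2}+2L_{2i+1}-L_i$; (e) $g_2(L_3,L_5,L_6)=L_5+3L_6-L_3=61$; (f) if $r=\lfloor (L_i-1)/F_k\rfloor\ge 2$ (which holds exactly when $k\le i$ and $(i,k)\ne(3,3)$), then $$g_2(L_i,L_{i+2},L_{i+k})=\begin{cases}(L_i-rF_k-1)L_{i+2}+(r+2)L_{i+k}-L_i & \text{if } (L_i-rF_k)L_{i+2}\ge F_{k-2}L_i,\\ (F_k-1)L_{i+2}+(r+1)L_{i+k}-L_i & \text{if } (L_i-rF_k)L_{i+2}< F_{k-2}L_i.\end{cases}$$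
   Context: Fibonacci numbers: $F_0=0$, $F_1=1$, $F_n=F_{n-1}+F_{n-2}$. Lucas numbers: $L_0=2$, $L_1=1$, $L_n=L_{n-1}+L_{n-2}$. For positive integers $a_1,\dots,a_l$ with $\gcd(a_1,\dots,a_l)=1$ and an integer $n$, let $d(n;a_1,\dots,a_l)$ be the number of tuples $(x_1,\dots,x_l)$ of nonnegative integers with $a_1x_1+\dots+a_lx_l=n$. For a nonnegative integer $p$, the $p$-Frobenius number $g_p(a_1,\dots,a_l)$ is the largest integer $n$ with $d(n;a_1,\dots,a_l)\le p$. *)

From mathcomp Require Import all_boot.
Set Implicit Arguments. Unset Strict Implicit. Unset Printing Implicit Defensive.

Fixpoint fib (n : nat) : nat :=
  match n with
  | 0 => 0
  | 1 => 1
  | (m.+1 as p).+1 => fib p + fib m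
  end.

Fixpoint lucas (n : nat) : nat :=
  match n with
  | 0 => 2
  | 1 => 1
  | (m.+1 as p).+1 => lucas p + lucas m
  end.

(* Since all a_j are positive, each x_j is
   at most n, so we may range each x_j over 'I_n.+1 = {0,...,n}. *)
Definition nsol (n : nat) (a : seq nat) : nat :=
  #|[set x : {ffun 'I_(size a) -> 'I_n.+1} | \sum_(j < size a) nth 0 a j * x j == n]|.

(* "g_p(a) = g": g is the largest integer n with d(n; a) <= p.
   (For negative n, d(n;a) = 0 <= p, so the largest such integer, when it is
   a nonnegative g, is characterized by d(g) <= p and d(m) > p for all m > g.) *)
Definition is_pFrobenius (p : nat) (a : seq nat) (g : nat) : Prop :=
  nsol g a <= p /\ forall m : nat, g < m -> p < nsol m a.

From mathcomp Require Import all_boot zify.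
Set Implicit Arguments. Unset Strict Implicit.

(* Write a = L_i, b = L_(i+2), c = L_(i+k), s = F_(k-2) and t = F_k, so that
   c + s a = t b (a Lucas-Fibonacci identity) and gcd(a, b) = 1.  As c = t b
   (mod a), a representation n = a x + b y + c z is determined by (y, z), and
   y + z t is then congruent mod a to the unique u < a with u b = n (mod a).
   Writing y + z t = u + j a, the weight b y + c z of (y, z) is (u + j a) b - z s a.
   So g is the 2-Frobenius number as soon as the class of g has at most two
   pairs (j, z) of weight at most g while every class has three pairs of weight
   at most g + a: each n > g lies above three weights of its class, each giving
   a representation.  The parts of the theorem correspond to the size of t
   relative to a, which dictates where the cheapest pairs of each class lie. *)

Lemma sum_nth3 a b c n (f : {ffun 'I_3 -> 'I_n.+1}) :
  \sum_(j < 3) nth 0 [:: a; b; c] j * f j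
  = a * f ord0 + b * f (inord 1) + c * f (inord 2).
Proof.
rewrite !big_ord_recl big_ord0 /= addn0 addnA.
by congr (_ + _ * f _ + _ * f _); apply: val_inj; rewrite /= inordK.
Qed.

Definition sol3 n x y z : {ffun 'I_3 -> 'I_n.+1} :=
  [ffun j : 'I_3 => inord (nth 0 [:: x; y; z] j)].

Lemma sol3E n (f : {ffun 'I_3 -> 'I_n.+1}) :
  f = sol3 n (f ord0) (f (inord 1)) (f (inord 2)).
Proof.
apply/ffunP => -[[|[|[|//]]] lt_j3]; rewrite ffunE;
  apply: val_inj; rewrite /= inordK //; congr (val (f _)); apply: val_inj;
  by rewrite /= ?inordK.
Qed.

Lemma sol3_val n x y z : x <= n -> y <= n -> z <= n ->
  [/\ sol3 n x y z ord0 = x :> nat, sol3 n x y z (inord 1) = y :> nat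
    & sol3 n x y z (inord 2) = z :> nat].
Proof. by move=> *; rewrite !ffunE /= !inordK. Qed.

Section Nsol3.

Variables (a b c n : nat).
Hypothesis a_gt0 : 0 < a.

Let sol_of (p : nat * nat) := sol3 n ((n - b * p.1 - c * p.2) %/ a) p.1 p.2.

Let solve_x x y z : (a * x + b * y + c * z - b * y - c * z) %/ a = x.
Proof. by rewrite (_ : _ - _ - _ = x * a) ?mulnK //; lia. Qed.

Lemma nsol3_le_size (S : seq (nat * nat)) :
  (forall x y z, a * x + b * y + c * z = n -> (y, z) \in S) ->
  nsol n [:: a; b; c] <= size S.
Proof.
move=> solS; rewrite /nsol -(size_map sol_of).
apply: leq_trans (card_size _); apply/subset_leq_card/subsetP => f.
rewrite inE sum_nth3 => /eqP def_n; rewrite [f]sol3E.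
have := solve_x (f ord0) (f (inord 1)) (f (inord 2)); rewrite def_n => {1}<-.
exact: map_f (solS _ _ _ def_n).
Qed.

Hypotheses (b_gt0 : 0 < b) (c_gt0 : 0 < c).

Let sol3_valE x y z : a * x + b * y + c * z = n ->
  [/\ sol3 n x y z ord0 = x :> nat, sol3 n x y z (inord 1) = y :> nat
    & sol3 n x y z (inord 2) = z :> nat].
Proof. by move=> def_n; apply: sol3_val; nia. Qed.

Let sol_ofE x p : a * x + b * p.1 + c * p.2 = n -> sol_of p = sol3 n x p.1 p.2.
Proof. by move=> def_n; rewrite /sol_of (_ : _ %/ a = x) // -def_n solve_x. Qed.

Lemma nsol3_ge_size (S : seq (nat * nat)) : uniq S ->
  (forall p, p \in S -> exists x, a * x + b * p.1 + c * p.2 = n) ->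
  size S <= nsol n [:: a; b; c].
Proof.
move=> uS solS; rewrite /nsol cardE -(size_map sol_of).
apply: uniq_leq_size => [|_ /mapP[p /solS[x def_n] ->]].
  rewrite map_inj_in_uniq // => p q /solS[x def_n] /solS[x' def_n'].
  rewrite (sol_ofE def_n) (sol_ofE def_n').
  move/(congr1 (fun f : {ffun _ -> _} => (val (f (inord 1)), val (f (inord 2))))) => /=.
  have [_ -> ->] := sol3_valE def_n; have [_ -> ->] := sol3_valE def_n'.
  by rewrite -!surjective_pairing.
have [x_val y_val z_val] := sol3_valE def_n.
by rewrite mem_enum inE sum_nth3 (sol_ofE def_n) x_val y_val z_val def_n.
Qed.

End Nsol3.

Lemma coprime_modnMr_cancel a b v u :
  coprime a b -> v * b = u * b %[mod a] -> v = u %[mod a].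
Proof.
move=> co_ab; wlog le_uv : v u / u <= v.
  by move=> W; have [/W//|/ltnW/W W' /esym/W'] := leqP u v.
move/eqP; rewrite eqn_mod_dvd ?leq_mul2r ?le_uv ?orbT // -mulnBl Gauss_dvdl //.
by rewrite -eqn_mod_dvd // => /eqP.
Qed.

Lemma coprime_modnMr_onto a b m : 0 < a -> coprime a b ->
  exists2 u, u < a & u * b = m %[mod a].
Proof.
move=> a_gt0 co_ab; have [e _] := Bezoutl b a_gt0.
rewrite (eqP co_ab) => /dvdnP[q def_q].
exists ((m * e * (a - 1)) %% a); first by rewrite ltn_mod.
have def_mb : m * e * (a - 1) * b + m * a = m * q * (a - 1) * a + m.
  by case: a a_gt0 co_ab def_q => // a' _ _ def_q; rewrite subn1 /=; nia.
by rewrite modnMml -(modnMDl m) addnC def_mb modnMDl.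
Qed.

Lemma modn_addMl_eq a b g u K M : g + K * a = u * b + M * a -> g = u * b %[mod a].
Proof. by move/(congr1 (modn^~ a)); rewrite /= ![_ + _ * a]addnC !modnMDl. Qed.

Section RepsModA.

Variables a b c s t : nat.
Hypotheses (a_gt0 : 0 < a) (b_gt0 : 0 < b) (c_gt0 : 0 < c).
Hypothesis coprime_ab : coprime a b.
Hypothesis cst : c + s * a = t * b.

Lemma weight_cst y z : b * y + c * z + z * s * a = (y + z * t) * b.
Proof. by have := congr1 (muln z) cst; lia. Qed.

(* [p = (j, z)] encodes the pair [(y, z) := rep_pt u p] with [y + z t = u + j a];
   as [c = t b (mod a)], every such pair has [b y + c z = u b (mod a)], and its
   weight [b y + c z] is [(u + j a) b - z s a].  [rep_le G u p] says that this
   pair exists ([y >= 0]) and has weight at most [G]. *)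
Definition rep_pt (u : nat) (p : nat * nat) : nat * nat :=
  (u + p.1 * a - p.2 * t, p.2).

Definition rep_le (G u : nat) (p : nat * nat) : bool :=
  (p.2 * t <= u + p.1 * a) && ((u + p.1 * a) * b <= G + p.2 * s * a).

Lemma rep_pt_weight u p : p.2 * t <= u + p.1 * a ->
  b * (rep_pt u p).1 + c * (rep_pt u p).2 + p.2 * s * a = (u + p.1 * a) * b.
Proof. by move=> le_zt; rewrite weight_cst /= subnK. Qed.

Lemma rep_pt_inj u :
  {in [pred p | p.2 * t <= u + p.1 * a] &, injective (rep_pt u)}.
Proof.
move=> [j z] [j' z']; rewrite !inE /= => le_zt le_zt' [def_y def_z].
subst z'; have /addnI/eqP : u + j * a = u + j' * a.
  by rewrite -(subnK le_zt) -(subnK le_zt') def_y.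
by rewrite eqn_mul2r eqn0Ngt a_gt0 => /eqP ->.
Qed.

Lemma pFrobenius2_of_reps g u0 p1 p2 : u0 < a -> g = u0 * b %[mod a] ->
  (forall p, rep_le g u0 p -> p \in [:: p1; p2]) ->
  (forall u, u < a -> exists p q r,
     uniq [:: p; q; r] /\ all (rep_le (g + a) u) [:: p; q; r]) ->
  is_pFrobenius 2 [:: a; b; c] g.
Proof.
move=> lt_u0a g_mod reps_g reps_up; split.
  apply: leq_trans (nsol3_le_size (S := map (rep_pt u0) [:: p1; p2]) _ _) _ => //.
  move=> x y z def_g; pose j := (y + z * t) %/ a.
  have yzt_mod : y + z * t = u0 %[mod a].
    apply: (coprime_modnMr_cancel coprime_ab); rewrite -weight_cst -g_mod -def_g.
    by rewrite [in LHS]addnC modnMDl -addnA [a * x]mulnC modnMDl.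
  have def_yzt : y + z * t = u0 + j * a.
    by rewrite {1}(divn_eq (y + z * t) a) yzt_mod modn_small // addnC.
  have rep_yz : rep_le g u0 (j, z).
    by rewrite /rep_le /= -def_yzt leq_addl -weight_cst -def_g; lia.
  by rewrite (_ : (y, z) = rep_pt u0 (j, z)) ?map_f ?reps_g // /rep_pt /= -def_yzt addnK.
move=> m lt_gm; have [u lt_ua um] := coprime_modnMr_onto m a_gt0 coprime_ab.
have [p [q [r [uniq_pqr reps_pqr]]]] := reps_up u lt_ua.
apply: (@leq_trans (size (map (rep_pt u) [:: p; q; r]))) => //.
apply: nsol3_ge_size => //.
  rewrite map_inj_in_uniq // => x y /(allP reps_pqr)/andP[x_ok _].
  by move=> /(allP reps_pqr)/andP[y_ok _]; apply: rep_pt_inj.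
move=> _ /mapP[[j z] /(allP reps_pqr)/andP[/= le_zt le_weight] ->].
have := rep_pt_weight (u := u) (p := (j, z)) le_zt; rewrite /=.
set w := b * _ + c * z => def_w.
have w_mod : w = m %[mod a].
  by rewrite -um -(modnMDl (z * s) w) addnC def_w mulnDl mulnAC addnC modnMDl.
have le_wm : w <= m.
  rewrite leqNgt; apply/negP => lt_mw.
  have /dvdn_leq : a %| w - m by rewrite -eqn_mod_dvd ?(ltnW lt_mw) // w_mod.
  lia.
have /dvdnP[x def_x] : a %| m - w by rewrite -eqn_mod_dvd // w_mod.
by exists x; rewrite -/w; lia.
Qed.

Hypothesis s_gt0 : 0 < s.
Hypothesis small_s : 5 * s * a <= t * b.

Lemma t_gt0 : 0 < t.
Proof. by move: cst; case: t => //; rewrite mul0n; case: c c_gt0. Qed.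

Lemma leq_ac : a <= c.
Proof. have : a <= s * a by rewrite leq_pmull. lia. Qed.

Lemma rep_le_level G u p M : rep_le G u p -> G <= M * b -> 4 * (u + p.1 * a) <= 5 * M.
Proof.
case: p => j z /andP[/= le_zt le_w] le_GM; set v := u + j * a in le_zt le_w *.
have le_vc : v * c <= t * G.
  have: t * (v * b) <= t * (G + z * s * a) by rewrite leq_mul2l le_w orbT.
  have: z * t * (s * a) <= v * (s * a) by rewrite leq_mul2r le_zt orbT.
  have: v * (c + s * a) = v * (t * b) by rewrite cst.
  nia.
have: t * (4 * v * b) <= t * (5 * M * b).
  have: v * (5 * s * a) <= v * (t * b) by rewrite leq_mul2l small_s orbT.
  have: v * (c + s * a) = v * (t * b) by rewrite cst.
  have: t * G <= t * (M * b) by rewrite leq_mul2l le_GM orbT.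
  nia.
by rewrite leq_mul2l eqn0Ngt t_gt0 /= leq_mul2r eqn0Ngt b_gt0.
Qed.

Lemma pFrobenius2_t_ge3a : 3 * a <= t ->
  is_pFrobenius 2 [:: a; b; c] ((3 * a - 1) * b - a).
Proof.
move=> le_3a_t; set g := _ - a.
have def_g : g + a + b = 3 * a * b by rewrite /g; nia.
apply: (pFrobenius2_of_reps (u0 := a - 1) (p1 := (0, 0)) (p2 := (1, 0))).
- lia.
- by apply: (modn_addMl_eq (K := 1) (M := 2 * b)); nia.
- move=> [j z] /[dup] rep_jz /andP[/= le_zt le_w].
  have /= lvl := rep_le_level rep_jz (leq_subr _ _).
  have : j * a < 3 * a by lia.
  rewrite ltn_mul2r => /andP[_ lt_j3].
  have le_ja : j * a <= 2 * a by rewrite leq_mul2r -ltnS lt_j3 orbT.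
  have : z * t < 1 * t by lia.
  rewrite ltn_mul2r => /andP[_ /[!ltnS] /[!leqn0] /eqP z0].
  subst z; clear rep_jz lvl le_ja le_zt; case: j lt_j3 le_w => [|[|[|//]]] _ le_w;
    rewrite ?inE //; clear -le_w def_g a_gt0; nia.
- move=> u lt_ua; exists (0, 0), (1, 0), (2, 0); split=> //.
  rewrite /= /rep_le /= !mul0n !addn0 /=; nia.
Qed.

Lemma pFrobenius2_t_le2a : a < t -> t <= 2 * a -> s * a <= (t - a) * b ->
  is_pFrobenius 2 [:: a; b; c] ((a + t - 1) * b - s * a - a).
Proof.
move=> lt_at le_t2a le_sa; set g := _ - a.
have [d def_t] : exists d, t = d + a + 1 by exists (t - a - 1); lia.
have le_sab : s * a + a * b <= t * b by move: le_sa; rewrite mulnBl; nia.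
have def_g : g + a + s * a + b = a * b + t * b by rewrite /g; nia.
apply: (pFrobenius2_of_reps (u0 := d) (p1 := (0, 0)) (p2 := (1, 0))).
- lia.
- by apply: (modn_addMl_eq (K := s + 1) (M := 2 * b)); nia.
- move=> [j z] /[dup] rep_jz /andP[/= le_zt le_w].
  have /= lvl := rep_le_level rep_jz (leq_trans (leq_subr _ _) (leq_subr _ _)).
  have : j * a < 3 * a by lia.
  rewrite ltn_mul2r => /andP[_ lt_j3].
  have le_ja : j * a <= 2 * a by rewrite leq_mul2r -ltnS lt_j3 orbT.
  have : z * t < 2 * t by lia.
  rewrite ltn_mul2r => /andP[_ lt_z2].
  clear rep_jz lvl le_ja; case: j lt_j3 le_zt le_w => [|[|[|//]]] _;
    case: z lt_z2 => [|[|//]] _ le_zt le_w; rewrite ?inE //;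
    clear -le_zt le_w def_g def_t a_gt0; nia.
- move=> u lt_ua; have [le_t_ua|lt_ua_t] := leqP t (u + a).
  + exists (0, 0), (1, 0), (1, 1); split=> //; rewrite /= /rep_le /=; nia.
  + exists (0, 0), (1, 0), (2, 1); split=> //; rewrite /= /rep_le /=; nia.
Qed.

Lemma pFrobenius2_t_lt2a : a < t -> t < 2 * a -> (t - a) * b <= s * a ->
  is_pFrobenius 2 [:: a; b; c] ((2 * a - 1) * b - a).
Proof.
move=> lt_at lt_t2a le_sa; set g := _ - a.
have le_sab : t * b <= s * a + a * b by move: le_sa; rewrite mulnBl; nia.
have def_g : g + a + b = 2 * a * b by rewrite /g; nia.
apply: (pFrobenius2_of_reps (u0 := a - 1) (p1 := (0, 0)) (p2 := (1, 1))).
- lia.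
- by apply: (modn_addMl_eq (K := 1) (M := b)); nia.
- move=> [j z] /[dup] rep_jz /andP[/= le_zt le_w].
  have /= lvl := rep_le_level rep_jz (leq_subr _ _).
  have : j * a < 2 * a by lia.
  rewrite ltn_mul2r => /andP[_ lt_j2].
  have le_ja : j * a <= a by rewrite -[X in _ <= X]mul1n leq_mul2r -ltnS lt_j2 orbT.
  have : z * t < 2 * t by lia.
  rewrite ltn_mul2r => /andP[_ lt_z2].
  clear rep_jz lvl le_ja; case: j lt_j2 le_zt le_w => [|[|//]] _;
    case: z lt_z2 => [|[|//]] _ le_zt le_w; rewrite ?inE //;
    clear -le_zt le_w def_g a_gt0 lt_at; nia.
- move=> u lt_ua; have [le_t_ua|lt_ua_t] := leqP t (u + a).
  + exists (0, 0), (1, 0), (1, 1); split=> //; rewrite /= /rep_le /=; nia.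
  + exists (0, 0), (1, 0), (2, 1); split=> //; rewrite /= /rep_le /=; nia.
Qed.

Lemma pFrobenius2_t_lta : t < a -> 2 * a < 3 * t -> s * a <= (a - t) * b ->
  is_pFrobenius 2 [:: a; b; c] ((2 * a - 1) * b - 2 * s * a - a).
Proof.
move=> lt_ta lt_2a3t le_sa; set g := _ - a.
have le_sab : s * a + t * b <= a * b by move: le_sa; rewrite mulnBl; nia.
have def_g : g + a + 2 * s * a + b = 2 * a * b by rewrite /g; nia.
apply: (pFrobenius2_of_reps (u0 := a - 1) (p1 := (0, 0)) (p2 := (0, 1))).
- lia.
- by apply: (modn_addMl_eq (K := 2 * s + 1) (M := b)); nia.
- move=> [j z] /[dup] rep_jz /andP[/= le_zt le_w].
  have /= lvl := rep_le_level rep_jz (leq_trans (leq_subr _ _) (leq_subr _ _)).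
  have : j * a < 2 * a by lia.
  rewrite ltn_mul2r => /andP[_ lt_j2].
  have le_ja : j * a <= a by rewrite -[X in _ <= X]mul1n leq_mul2r -ltnS lt_j2 orbT.
  have : z * t < 3 * t by lia.
  rewrite ltn_mul2r => /andP[_ lt_z3].
  clear rep_jz lvl le_ja; case: j lt_j2 le_zt le_w => [|[|//]] _;
    case: z lt_z3 => [|[|[|//]]] _ le_zt le_w; rewrite ?inE //;
    clear -le_zt le_w def_g a_gt0 lt_2a3t; nia.
- move=> u lt_ua; have le_ua_b : (u + a) * b + b <= 2 * a * b.
    by rewrite -mulSnr leq_mul2r; lia.
  have [le_tu|lt_ut] := leqP t u.
    exists (0, 0), (0, 1), (1, 2); split=> //; rewrite /= /rep_le /=.
    clear -le_ua_b le_sab def_g lt_ta le_tu small_s; nia.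
  have le_ut_b : (u + a) * b + b <= (t + a) * b by rewrite -mulSnr leq_mul2r; lia.
  have [le_2t_ua|lt_ua_2t] := leqP (2 * t) (u + a).
  + exists (0, 0), (1, 1), (1, 2); split=> //; rewrite /= /rep_le /=.
    clear -le_ua_b le_ut_b le_sab def_g le_2t_ua lt_ut; nia.
  + have le_u2t_b : (u + a) * b + b <= 2 * t * b by rewrite -mulSnr leq_mul2r lt_ua_2t orbT.
    exists (0, 0), (1, 0), (1, 1); split=> //; rewrite /= /rep_le /=.
    clear -le_u2t_b le_ut_b le_sab def_g lt_ta lt_ut; nia.
Qed.

Lemma three_reps_r_ge2 r G u : 2 <= r -> r * t < a -> a <= r.+1 * t ->
  a * b + 2 * t * b <= G + (r + 2) * s * a + b ->
  (r + 2) * t * b <= G + (r + 1) * s * a + b -> u < a ->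
  exists p q w, uniq [:: p; q; w] /\ all (rep_le G u) [:: p; q; w].
Proof.
move=> le2r lt_rta le_ar1t G_ge1 G_ge2 lt_ua.
(* Each unit of z lowers the weight by [s a], so the pairs are taken with z
   as large as the levels j = 0 and j = 1 allow. *)
have lt_mulb x y : x < y -> x * b + b <= y * b.
  by move=> lt_xy; rewrite -mulSnr leq_mul2r lt_xy orbT.
have le_rsa : r * (5 * s * a) <= r * (t * b) by rewrite leq_mul2l small_s orbT.
have [le_2tu|lt_u2t] := leqP (2 * t) u.
  have [q /andP[le_qt lt_qt]] : exists q, q * t <= u < q.+1 * t.
    by exists (u %/ t); rewrite leq_divM ltn_ceil ?t_gt0.
  have [q' def_q] : exists q', q = q' + 2.
    exists (q - 2); suff: 2 < q.+1 by lia.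
    by rewrite -(ltn_pmul2r t_gt0); apply: leq_ltn_trans lt_qt.
  have [d def_r] : exists d, r = q + d.
    exists (r - q); suff: q < r.+1 by lia.
    by rewrite -(ltn_pmul2r t_gt0); apply: leq_ltn_trans (leq_trans lt_ua le_ar1t).
  subst q r; have le_ub := lt_mulb _ _ lt_qt.
  have le_d5 : (d + 1) * (5 * s * a) <= (d + 1) * (t * b) by rewrite leq_mul2l small_s orbT.
  have le_ab := lt_mulb _ _ lt_rta.
  have rep_z z : q' <= z <= q' + 2 -> rep_le G u (0, z).
    case/andP=> le_q'z le_z; apply/andP; split=> /=; rewrite mul0n addn0.
      by apply: leq_trans le_qt; rewrite leq_mul2r le_z orbT.
    have : q' * (s * a) <= z * (s * a) by rewrite leq_mul2r le_q'z orbT.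
    clear -le_ub le_d5 le_ab G_ge1; nia.
  exists (0, q' + 2), (0, q' + 1), (0, q'); split; first by rewrite /= ?inE ?xpair_eqE; lia.
  by rewrite /= !rep_z //; lia.
have [q /andP[le_qt lt_qt]] : exists q, q * t <= u + a < q.+1 * t.
  by exists ((u + a) %/ t); rewrite leq_divM ltn_ceil ?t_gt0.
have le_ua_b := lt_mulb _ _ lt_qt.
have [le_tu|lt_ut] := leqP t u.
  have q_cases : q = r + 2 \/ q = r + 1.
    have : r.+1 < q.+1.
      by rewrite -(ltn_pmul2r t_gt0); apply: (leq_ltn_trans _ lt_qt); rewrite mulSn; lia.
    have : q.+1 < r.+4 by rewrite -(ltn_pmul2r t_gt0); move: le_ar1t; rewrite !mulSn; lia.
    lia.
  exists (0, 0), (0, 1), (1, q); split; first by rewrite /= ?inE ?xpair_eqE; lia.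
  have le_ub := lt_mulb _ _ lt_u2t.
  rewrite /= /rep_le /= !mul0n !mul1n !addn0 le_tu le_qt /=.
  by case: q_cases => def_q; subst q; clear -le_ub le_ua_b le_rsa G_ge1 G_ge2 lt_u2t le2r; nia.
have q_cases : q = r + 1 \/ q = r.
  have : r < q.+1 by rewrite -(ltn_pmul2r t_gt0); apply: (leq_ltn_trans _ lt_qt); lia.
  have : q.+1 < r.+3 by rewrite -(ltn_pmul2r t_gt0); move: le_ar1t; rewrite !mulSn; lia.
  lia.
exists (0, 0), (1, q), (1, q.-1); split; first by rewrite /= ?inE ?xpair_eqE; lia.
have le_ub := lt_mulb _ _ lt_ut.
rewrite /= /rep_le /= !mul0n !mul1n !addn0 le_qt (leq_trans _ le_qt) ?leq_mul2r ?leq_pred ?orbT //=.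
by case: q_cases => def_q; subst q; clear -le_ub le_ua_b le_rsa G_ge1 G_ge2 lt_ut le2r small_s; nia.
Qed.

Lemma pFrobenius2_r_ge2_small_s r : 2 <= r -> r * t < a -> a <= r.+1 * t ->
  s * a <= (a - r * t) * b ->
  is_pFrobenius 2 [:: a; b; c] ((a - r * t - 1) * b + (r + 2) * c - a).
Proof.
move=> le2r lt_rta le_ar1t le_sa; set g := _ - a.
have le_sab : s * a + r * t * b <= a * b by move: le_sa; rewrite mulnBl; nia.
have le_2rt : 2 * t <= r * t by rewrite leq_mul2r le2r orbT.
have le_ac := leq_ac.
have def_g : g + a + (r + 2) * s * a + b = a * b + 2 * t * b.
  have : (r + 2) * (c + s * a) = (r + 2) * (t * b) by rewrite cst.
  by rewrite /g; nia.
apply: (pFrobenius2_of_reps (u0 := 2 * t - 1) (p1 := (0, 0)) (p2 := (0, 1))).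
- lia.
- by apply: (modn_addMl_eq (K := 1 + (r + 2) * s) (M := b)); nia.
- move=> [j z] /[dup] rep_jz /andP[/= le_zt le_w].
  have le_g : g <= (a + 2 * t) * b by rewrite mulnDl; lia.
  have /= lvl := rep_le_level rep_jz le_g.
  have : j * a < 2 * a by lia.
  rewrite ltn_mul2r => /andP[_ lt_j2].
  clear rep_jz lvl le_g; case: j lt_j2 le_zt le_w => [|[|//]] _ le_zt le_w.
    have : z * t < 2 * t by lia.
    by rewrite ltn_mul2r => /andP[_]; case: z {le_zt le_w} => [|[|//]].
  have : z * t < (r + 3) * t by move: le_ar1t; rewrite !mulnDl mulSn; lia.
  rewrite ltn_mul2r => /andP[_ lt_zr3].
  have : z * (s * a) <= (r + 2) * (s * a) by rewrite leq_mul2r; lia.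
  clear -le_w def_g a_gt0; nia.
- move=> u; apply: (three_reps_r_ge2 le2r lt_rta le_ar1t); first by rewrite -def_g.
  by clear -def_g le_sab; nia.
Qed.

Lemma pFrobenius2_r_ge2_large_s r : 2 <= r -> r * t < a -> a <= r.+1 * t ->
  (a - r * t) * b < s * a ->
  is_pFrobenius 2 [:: a; b; c] ((t - 1) * b + (r + 1) * c - a).
Proof.
move=> le2r lt_rta le_ar1t lt_sa; set g := _ - a.
have lt_sab : a * b < s * a + r * t * b by move: lt_sa; rewrite mulnBl; nia.
have le_2rt : 2 * t <= r * t by rewrite leq_mul2r le2r orbT.
have lt_ar1t : a < r.+1 * t.
  rewrite ltn_neqAle le_ar1t andbT; apply/eqP => def_a.
  by move: lt_sa; rewrite def_a mulSn addnK; lia.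
have le_ac := leq_ac.
have def_g : g + a + (r + 1) * s * a + b = (r + 2) * t * b.
  have e1 : (t - 1) * b + b = t * b by rewrite -mulSnr subn1 prednK ?t_gt0.
  have e2 : (r + 1) * c + (r + 1) * s * a = (r + 1) * t * b.
    by rewrite -mulnA -mulnDr cst mulnA.
  have e3 : a <= (r + 1) * c by apply: leq_trans le_ac (leq_pmull _ _); rewrite addn1.
  rewrite /g; lia.
apply: (pFrobenius2_of_reps (u0 := (r + 2) * t - a - 1) (p1 := (0, 0)) (p2 := (0, 1))).
- lia.
- apply: (modn_addMl_eq (K := 1 + (r + 1) * s) (M := b)).
  have : ((r + 2) * t - a - 1) * b + (a + 1) * b = (r + 2) * t * b.
    by rewrite -mulnDl; congr (_ * b); move: lt_ar1t; rewrite !mulnDl; lia.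
  lia.
- move=> [j z] /[dup] rep_jz /andP[/= le_zt le_w].
  have le_g : g <= (r + 2) * t * b by lia.
  have /= lvl := rep_le_level rep_jz le_g.
  have : j * a < 2 * a by move: lvl le_ar1t; rewrite !mulnDl mulSn; lia.
  rewrite ltn_mul2r => /andP[_ lt_j2].
  clear rep_jz lvl le_g; case: j lt_j2 le_zt le_w => [|[|//]] _ le_zt le_w.
    have : z * t < 2 * t by move: le_zt; rewrite !mulnDl; lia.
    by rewrite ltn_mul2r => /andP[_]; case: z {le_zt le_w} => [|[|//]].
  have : z * t < (r + 2) * t by move: le_zt; rewrite !mulnDl; lia.
  rewrite ltn_mul2r => /andP[_ lt_zr2].
  have : z * (s * a) <= (r + 1) * (s * a) by rewrite leq_mul2r; lia.
  have e : (r + 2) * t - a - 1 + 1 * a = (r + 2) * t - 1 by lia.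
  by move: le_w; rewrite e mulnBl mul1n; lia.
- move=> u; apply: (three_reps_r_ge2 le2r lt_rta le_ar1t); last by rewrite def_g.
  by clear -def_g lt_sab; nia.
Qed.

End RepsModA.

Lemma pFrobenius2_4_11_18 : is_pFrobenius 2 [:: 4; 11; 18] 61.
Proof.
apply: (@pFrobenius2_of_reps 4 11 18 1 2 _ _ _ _ _ 61 3 (0, 0) (0, 1)) => //.
  by move=> [j z] /andP[/= le_zt le_w]; rewrite !inE !xpair_eqE; lia.
move=> [|[|[|[|//]]]] _.
1-3: by exists (0, 0), (1, 1), (1, 2).
by exists (0, 0), (0, 1), (1, 3).
Qed.

Lemma fibSS n : fib n.+2 = fib n.+1 + fib n. Proof. by []. Qed.
Lemma lucasSS n : lucas n.+2 = lucas n.+1 + lucas n. Proof. by []. Qed.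

Lemma fib_gt0 n : (0 < fib n) = (0 < n).
Proof. by case: n => // n; elim: n => // n IHn; rewrite fibSS addn_gt0 IHn. Qed.

Lemma leq_fib m n : m <= n -> fib m <= fib n.
Proof.
move/subnK <-; elim: (n - m) => // d IHd; apply: leq_trans IHd _.
by rewrite addSn; case: (d + m) => // k; rewrite fibSS leq_addr.
Qed.

Lemma lucas_fib n : lucas n.+1 = fib n + fib n.+2.
Proof.
elim: n {-2}n (leqnn n) => [|n IHn] [|[|k]] le_kn //.
by rewrite lucasSS (IHn k.+1 le_kn) (IHn k (ltnW le_kn)) (fibSS k.+2) (fibSS k); lia.
Qed.

Lemma lucas_gt0 n : 0 < lucas n.
Proof. by case: n => // n; rewrite lucas_fib addn_gt0 !fib_gt0 /= orbT. Qed.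

Lemma lucas_add_fib i k :
  lucas (i + k.+2) + fib k * lucas i = fib k.+2 * lucas (i + 2).
Proof.
elim: k {-2}k (leqnn k) => [|k IHk] [|[|n]] le_nk //.
  rewrite addn2 addn3 !lucasSS [fib 1]/= [fib 3]/=; lia.
have := IHk n.+1 le_nk; have := IHk n (ltnW le_nk).
have -> : lucas (i + n.+4) = lucas (i + n.+3) + lucas (i + n.+2) by rewrite !addnS.
have : fib n.+2 * lucas i = fib n.+1 * lucas i + fib n * lucas i.
  by rewrite fibSS mulnDl.
by rewrite (fibSS n.+2) mulnDl; lia.
Qed.

Lemma coprime_lucasS n : coprime (lucas n) (lucas n.+1).
Proof. by elim: n => // n IHn; rewrite /coprime lucasSS gcdnDl gcdnC. Qed.

Lemma coprime_lucas2 n : coprime (lucas n) (lucas (n + 2)).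
Proof. by rewrite addn2 /coprime lucasSS gcdnDr; apply: coprime_lucasS. Qed.

Lemma cassini n :
  fib n.+1 * fib n.+1 + odd n = fib n.+1 * fib n + fib n * fib n + ~~ odd n.
Proof. by elim: n => // n IHn; rewrite fibSS /=; case: (odd n) IHn => /=; nia. Qed.

Lemma fib_lucas_coords i : 3 <= i -> let P := fib (i - 2) in let Q := fib (i - 3) in
  [/\ [/\ fib (i - 1) = P + Q, fib i = 2 * P + Q, fib (i + 1) = 3 * P + 2 * Q
        & fib (i + 2) = 5 * P + 3 * Q],
      fib (i + 3) = 8 * P + 5 * Q, fib (i + 4) = 13 * P + 8 * Q,
      lucas i = 4 * P + 3 * Q & lucas (i + 2) = 11 * P + 7 * Q].
Proof.
case: i => [|[|[|m]]] // _; cbv zeta; rewrite !subSS !subn0 !addnS !addn0.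
have f2 : fib m.+2 = fib m.+1 + fib m by [].
have f3 : fib m.+3 = 2 * fib m.+1 + fib m by rewrite fibSS f2; lia.
have f4 : fib m.+4 = 3 * fib m.+1 + 2 * fib m by rewrite fibSS f3 f2; lia.
have f5 : fib m.+4.+1 = 5 * fib m.+1 + 3 * fib m by rewrite fibSS f4 f3; lia.
have f6 : fib m.+4.+2 = 8 * fib m.+1 + 5 * fib m by rewrite fibSS f5 f4; lia.
have f7 : fib m.+4.+3 = 13 * fib m.+1 + 8 * fib m by rewrite fibSS f6 f5; lia.
by split=> //; rewrite lucas_fib ?f4 ?f6; lia.
Qed.

Lemma lucas_fib_triple i k : 3 <= i ->
  [/\ 0 < lucas (i + k.+2), coprime (lucas i) (lucas (i + 2)),
      lucas (i + k.+2) + fib k * lucas i = fib k.+2 * lucas (i + 2)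
    & 5 * fib k * lucas i <= fib k.+2 * lucas (i + 2)].
Proof.
move=> le3i; split; [exact: lucas_gt0 | exact: coprime_lucas2 | exact: lucas_add_fib |].
have [_ _ _ La Lb] := fib_lucas_coords le3i.
have le_QP : fib (i - 3) <= fib (i - 2) by apply: leq_fib; lia.
have le_2k : 2 * fib k <= fib k.+2 by have := leq_fib (leqnSn k); rewrite fibSS; lia.
have le_ab : 5 * lucas i <= 2 * lucas (i + 2) by rewrite La Lb; lia.
have := leq_mul le_2k (leqnn (lucas (i + 2))).
have := leq_mul (leqnn (fib k)) le_ab.
lia.
Qed.

Section LucasTriples.

Variable i : nat.
Hypothesis le3i : 3 <= i.

Let P := fib (i - 2).
Let Q := fib (i - 3).

Let P_gt0 : 0 < P.
Proof. by rewrite /P fib_gt0; lia. Qed.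

Let le_QP : Q <= P.
Proof. by apply: leq_fib; lia. Qed.

Let a_gt0 : 0 < lucas i. Proof. exact: lucas_gt0. Qed.
Let b_gt0 : 0 < lucas (i + 2). Proof. exact: lucas_gt0. Qed.

Lemma pFrobenius2_lucas_far k : i + 4 <= k ->
  is_pFrobenius 2 [:: lucas i; lucas (i + 2); lucas (i + k)]
    ((3 * lucas i - 1) * lucas (i + 2) - lucas i).
Proof.
case: k => [|[|k]] le_k; try by exfalso; lia.
have [c_gt0 co cst small] := lucas_fib_triple k le3i.
have [_ _ f4 La _] := fib_lucas_coords le3i.
have s_gt0 : 0 < fib k by rewrite fib_gt0; lia.
apply: (pFrobenius2_t_ge3a (s := fib k) (t := fib k.+2)) => //.
have := leq_fib le_k; rewrite f4 La -/P -/Q; lia.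
Qed.

Lemma pFrobenius2_lucas_2i3 :
  is_pFrobenius 2 [:: lucas i; lucas (i + 2); lucas (2 * i + 3)]
    ((lucas i - 1) * lucas (i + 2) + lucas (2 * i + 3) - lucas i).
Proof.
have [c_gt0 co cst small] := lucas_fib_triple (i + 1) le3i.
rewrite (_ : (i + 1).+2 = i + 3) ?addnA in c_gt0 cst small; last lia.
rewrite (_ : 2 * i + 3 = i + i + 3); last lia.
have [[_ _ f1 _] f3 _ La Lb] := fib_lucas_coords le3i.
have e : (lucas i + fib (i + 3) - 1) * lucas (i + 2)
         = (lucas i - 1) * lucas (i + 2) + fib (i + 3) * lucas (i + 2).
  by rewrite -mulnDl; congr (_ * _); lia.
rewrite (_ : _ + _ - _ = (lucas i + fib (i + 3) - 1) * lucas (i + 2)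
                         - fib (i + 1) * lucas i - lucas i); last lia.
apply: (pFrobenius2_t_le2a (s := fib (i + 1)) (t := fib (i + 3))) => //.
all: rewrite ?f1 ?f3 ?La ?Lb -/P -/Q; lia.
Qed.

Let cassini_PQ : P * P + ~~ odd i = P * Q + Q * Q + odd i.
Proof.
have := cassini (i - 3); rewrite (_ : (i - 3).+1 = i - 2) -/P -/Q; last lia.
by rewrite oddB // addbT negbK.
Qed.

Lemma pFrobenius2_lucas_2i2_odd : odd i ->
  is_pFrobenius 2 [:: lucas i; lucas (i + 2); lucas (2 * i + 2)]
    ((lucas i - 1) * lucas (i + 2) + lucas (2 * i + 2) - lucas i).
Proof.
move=> odd_i; have [c_gt0 co cst small] := lucas_fib_triple i le3i.
rewrite (_ : 2 * i + 2 = i + i.+2); last lia.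
have [[_ f0 _ f2] _ _ La Lb] := fib_lucas_coords le3i.
have e : (lucas i + fib i.+2 - 1) * lucas (i + 2)
         = (lucas i - 1) * lucas (i + 2) + fib i.+2 * lucas (i + 2).
  by rewrite -mulnDl; congr (_ * _); lia.
rewrite (_ : _ + _ - _ = (lucas i + fib i.+2 - 1) * lucas (i + 2)
                         - fib i * lucas i - lucas i); last lia.
have cas := cassini_PQ; rewrite odd_i /= addn0 in cas.
apply: (pFrobenius2_t_le2a (s := fib i) (t := fib i.+2)) => //.
all: rewrite -?(addn2 i) ?f0 ?f2 ?La ?Lb -/P -/Q; lia.
Qed.

Lemma pFrobenius2_lucas_2i2_even : ~~ odd i ->
  is_pFrobenius 2 [:: lucas i; lucas (i + 2); lucas (2 * i + 2)]
    ((2 * lucas i - 1) * lucas (i + 2) - lucas i).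
Proof.
move=> even_i; have [c_gt0 co cst small] := lucas_fib_triple i le3i.
rewrite (_ : 2 * i + 2 = i + i.+2); last lia.
have [[_ f0 _ f2] _ _ La Lb] := fib_lucas_coords le3i.
have cas := cassini_PQ; rewrite (negbTE even_i) /= addn0 in cas.
apply: (pFrobenius2_t_lt2a (s := fib i) (t := fib i.+2)) => //.
all: rewrite -?(addn2 i) ?f0 ?f2 ?La ?Lb -/P -/Q; lia.
Qed.

Lemma pFrobenius2_lucas_2i1 :
  is_pFrobenius 2 [:: lucas i; lucas (i + 2); lucas (2 * i + 1)]
    ((2 * fib (i - 1) - 1) * lucas (i + 2) + 2 * lucas (2 * i + 1) - lucas i).
Proof.
have [c_gt0 co cst small] := lucas_fib_triple (i - 1) le3i.
rewrite (_ : (i - 1).+2 = i + 1) in c_gt0 cst small; last lia.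
rewrite (_ : 2 * i + 1 = i + (i + 1)); last lia.
have [[fm1 _ f1 _] _ _ La Lb] := fib_lucas_coords le3i.
have a_st : lucas i = fib (i - 1) + fib (i + 1) by rewrite La fm1 f1; lia.
have s_gt0 : 0 < fib (i - 1) by rewrite fm1 -/P -/Q; lia.
have -> : (2 * fib (i - 1) - 1) * lucas (i + 2) + 2 * lucas (i + (i + 1)) - lucas i
        = (2 * lucas i - 1) * lucas (i + 2) - 2 * fib (i - 1) * lucas i - lucas i.
  have : lucas (i + 2) <= 2 * fib (i - 1) * lucas (i + 2) by rewrite leq_pmull // muln_gt0.
  have : lucas i * lucas (i + 2) = fib (i - 1) * lucas (i + 2) + fib (i + 1) * lucas (i + 2).
    by rewrite a_st mulnDl.
  by rewrite !mulnBl !mul1n; lia.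
apply: (pFrobenius2_t_lta (s := fib (i - 1)) (t := fib (i + 1))) => //.
all: rewrite ?fm1 ?f1 ?La ?Lb -/P -/Q; lia.
Qed.

Lemma lucas_div_fib_ge2 k : 3 <= k ->
  2 <= (lucas i - 1) %/ fib k <-> k <= i /\ (i, k) <> (3, 3).
Proof.
move=> le3k; have F_gt0 : 0 < fib k by rewrite fib_gt0; lia.
have [[fm1 f0 f1 _] _ _ La _] := fib_lucas_coords le3i.
rewrite leq_divRL //; split=> [le_2F | [le_ki ne_ik33]].
  split=> [|[i3 k3]]; last by rewrite i3 k3 in le_2F.
  rewrite leqNgt; apply/negP => /leq_fib; rewrite -addn1 f1.
  by move: le_2F; rewrite La -/P -/Q; lia.
have [le_ki1|eq_ki] : k <= i - 1 \/ k = i by lia.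
  by have := leq_fib le_ki1; rewrite fm1 La -/P -/Q; lia.
have i_ne3 : i != 3 by apply/eqP => i3; apply: ne_ik33; rewrite eq_ki i3.
have Q_gt0 : 0 < Q by rewrite /Q fib_gt0; lia.
by rewrite eq_ki f0 La -/P -/Q; lia.
Qed.

Lemma pFrobenius2_lucas_near k r : 3 <= k -> 2 <= r ->
  r * fib k < lucas i <= r.+1 * fib k ->
  (fib (k - 2) * lucas i <= (lucas i - r * fib k) * lucas (i + 2) ->
     is_pFrobenius 2 [:: lucas i; lucas (i + 2); lucas (i + k)]
       ((lucas i - r * fib k - 1) * lucas (i + 2) + (r + 2) * lucas (i + k) - lucas i)) /\
  ((lucas i - r * fib k) * lucas (i + 2) < fib (k - 2) * lucas i ->
     is_pFrobenius 2 [:: lucas i; lucas (i + 2); lucas (i + k)]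
       ((fib k - 1) * lucas (i + 2) + (r + 1) * lucas (i + k) - lucas i)).
Proof.
case: k => [|[|k]] // le3k le2r /andP[lt_rta le_ar1t]; rewrite !subSS subn0.
have [c_gt0 co cst small] := lucas_fib_triple k le3i.
have s_gt0 : 0 < fib k by rewrite fib_gt0; lia.
split=> [le_sa | lt_sa].
  by apply: (pFrobenius2_r_ge2_small_s (s := fib k) (t := fib k.+2)) => //.
by apply: (pFrobenius2_r_ge2_large_s (s := fib k) (t := fib k.+2)) => //.
Qed.

End LucasTriples.

Lemma divn_pred_bounds m d : 0 < m -> 0 < d ->
  (m - 1) %/ d * d < m <= ((m - 1) %/ d).+1 * d.
Proof.
move=> m_gt0 d_gt0; have := leq_divM (m - 1) d; have := ltn_ceil (m - 1) d_gt0.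
lia.
Qed.

Theorem theorem7 (i k : nat) (hi : 3 <= i) (hk : 3 <= k) :
  let L := lucas in
  let F := fib in
  let g2 := is_pFrobenius 2 in
  (* (a) *)
  (i + 4 <= k ->
     g2 [:: L i; L (i + 2); L (i + k)] ((3 * L i - 1) * L (i + 2) - L i)) /\
  (* (b) *)
  g2 [:: L i; L (i + 2); L (2 * i + 3)]
     ((L i - 1) * L (i + 2) + L (2 * i + 3) - L i) /\
  (* (c) *)
  (odd i ->
     g2 [:: L i; L (i + 2); L (2 * i + 2)]
        ((L i - 1) * L (i + 2) + L (2 * i + 2) - L i)) /\
  (~~ odd i ->
     g2 [:: L i; L (i + 2); L (2 * i + 2)]
        ((2 * L i - 1) * L (i + 2) - L i)) /\
  (* (d) *)
  g2 [:: L i; L (i + 2); L (2 * i + 1)]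
     ((2 * F (i - 1) - 1) * L (i + 2) + 2 * L (2 * i + 1) - L i) /\
  (* (e) *)
  (L 5 + 3 * L 6 - L 3 = 61 /\ g2 [:: L 3; L 5; L 6] 61) /\
  (* (f) *)
  (let r := (L i - 1) %/ F k in
   (2 <= r <-> (k <= i /\ (i, k) <> (3, 3))) /\
   (2 <= r ->
      (F (k - 2) * L i <= (L i - r * F k) * L (i + 2) ->
         g2 [:: L i; L (i + 2); L (i + k)]
            ((L i - r * F k - 1) * L (i + 2) + (r + 2) * L (i + k) - L i)) /\
      ((L i - r * F k) * L (i + 2) < F (k - 2) * L i ->
         g2 [:: L i; L (i + 2); L (i + k)]
            ((F k - 1) * L (i + 2) + (r + 1) * L (i + k) - L i)))).
Proof.
move=> L F g2; split; first exact: pFrobenius2_lucas_far.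
split; first exact: pFrobenius2_lucas_2i3.
split; first exact: pFrobenius2_lucas_2i2_odd.
split; first exact: pFrobenius2_lucas_2i2_even.
split; first exact: pFrobenius2_lucas_2i1.
split; first by split; [|exact: pFrobenius2_4_11_18].
move=> r; split; first exact: lucas_div_fib_ge2.
move=> le2r; apply: pFrobenius2_lucas_near => //.
apply: divn_pred_bounds; first exact: lucas_gt0.
by rewrite fib_gt0; lia.
Qed.
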